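(* Let $\alpha$ be a rational with $0<\alpha<1$, let $\mathsf{S}_1,\mathsf{S}_2,\ldots$ be positive rationals, and define $\mathsf{srtt}_1=\mathsf{S}_1$ and $\mathsf{srtt}_j=(1-\alpha)\mathsf{srtt}_{j-1}+\alpha\mathsf{S}_j$ for $j>1$. Let $c,r>0$ be rationals, let $i\ge 2$ and $n\ge 0$ be integers, and suppose $\mathsf{S}_i,\mathsf{S}_{i+1},\ldots,\mathsf{S}_{i+n}\in[c-r,c+r]$. Then $L\le \mathsf{srtt}_{i+n}\le H$, where $L=(1-\alpha)^{n+1}\mathsf{srtt}_{i-1}+\bigl(1-(1-\alpha)^{n+1}\bigr)(c-r)$ and $H=(1-\alpha)^{n+1}\mathsf{srtt}_{i-1}+\bigl(1-(1-\alpha)^{n+1}\bigr)(c+r)$.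
   Context: This models the smoothed round-trip-time estimator of the TCP retransmission timeout computation; $\mathsf{S}_j$ are RTT samples. *)

From mathcomp Require Import all_boot all_order all_algebra.
Set Implicit Arguments. Unset Strict Implicit. Unset Printing Implicit Defensive.
Import Order.TTheory GRing.Theory Num.Theory.
Local Open Scope ring_scope.

(* Smoothed RTT: sequences are indexed from 1; index 0 is unused.
   srtt a S 1 = S 1, srtt a S j = (1 - a) * srtt a S (j-1) + a * S j for j > 1.
   (srtt a S 0 is set to S 0, a junk value never used.) *)
Fixpoint srtt (a : rat) (S : nat -> rat) (j : nat) : rat :=
  match j with
  | 0%N => S 0%N
  | 1%N => S 1%N
  | j'.+1 => (1 - a) * srtt a S j' + a * S j
  end.

From mathcomp Require Import all_boot all_order all_algebra.
From mathcomp Require Import lra.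
Set Implicit Arguments. Unset Strict Implicit. Unset Printing Implicit Defensive.
Import Order.TTheory GRing.Theory Num.Theory.
Local Open Scope ring_scope.

(* After [n] smoothing steps from [x m], the weight left on [x m] is
   [(1 - a) ^+ n] and the remaining weight [1 - (1 - a) ^+ n] is spread over
   samples lying in [[lo, hi]], so [x (m + n)] lies between the corresponding
   convex combinations. *)

Section ExponentialSmoothing.

Variables (R : realDomainType) (a : R).
Hypotheses (a_ge0 : 0 <= a) (a_le1 : a <= 1).

Let one_sub_a_ge0 : 0 <= 1 - a. Proof. by rewrite subr_ge0. Qed.

Definition smoothed_on (x y : nat -> R) (m n : nat) :=
  forall k, (m < k <= m + n)%N -> x k = (1 - a) * x k.-1 + a * y k.

Lemma smoothing_le (x y : nat -> R) (m n : nat) (hi : R) :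
  smoothed_on x y m n -> (forall k, (m < k <= m + n)%N -> y k <= hi) ->
  x (m + n)%N <= (1 - a) ^+ n * x m + (1 - (1 - a) ^+ n) * hi.
Proof.
elim: n => [|n IH] xE y_le; first by rewrite addn0 expr0 subrr mul0r addr0 mul1r.
have in_range k : (m < k <= m + n)%N -> (m < k <= m + n.+1)%N.
  by case/andP=> mk kn; rewrite mk (leq_trans kn) ?leq_add2l.
have last_in_range : (m < m + n.+1 <= m + n.+1)%N.
  by rewrite leqnn addnS ltnS leq_addr.
have IHn := IH (fun k hk => xE k (in_range k hk))
               (fun k hk => y_le k (in_range k hk)).
have y_last := y_le _ last_in_range.
rewrite xE // addnS /= exprS in y_last *.
have := ler_wpM2l one_sub_a_ge0 IHn.
have := ler_wpM2l a_ge0 y_last.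
lra.
Qed.

(* The recurrence is linear, so the lower bound is the upper bound for [-x]. *)
Lemma smoothing_ge (x y : nat -> R) (m n : nat) (lo : R) :
  smoothed_on x y m n -> (forall k, (m < k <= m + n)%N -> lo <= y k) ->
  (1 - a) ^+ n * x m + (1 - (1 - a) ^+ n) * lo <= x (m + n)%N.
Proof.
move=> xE lo_le.
have xNE : smoothed_on (fun k => - x k) (fun k => - y k) m n.
  by move=> k hk; rewrite xE // opprD -!mulrN.
have yN_le k : (m < k <= m + n)%N -> - y k <= - lo.
  by move=> hk; rewrite lerN2 lo_le.
by have := smoothing_le xNE yN_le; rewrite !mulrN -opprD lerN2.
Qed.

End ExponentialSmoothing.

Lemma srttS (a : rat) (S : nat -> rat) (j : nat) :
  (1 <= j)%N -> srtt a S j.+1 = (1 - a) * srtt a S j + a * S j.+1.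
Proof. by case: j. Qed.

Lemma srtt_smoothed (a : rat) (S : nat -> rat) (m n : nat) :
  (1 <= m)%N -> smoothed_on a (srtt a S) S m n.
Proof. by move=> m_ge1 [|k] /andP[m_lt _] //; apply/srttS/(leq_trans m_ge1). Qed.

Theorem theorem2 (a : rat) (S : nat -> rat) (c r : rat) (i n : nat) :
  0 < a -> a < 1 ->
  (forall j : nat, (1 <= j)%N -> 0 < S j) ->
  0 < c -> 0 < r ->
  (2 <= i)%N ->
  (forall j : nat, (i <= j <= i + n)%N -> c - r <= S j <= c + r) ->
  (1 - a) ^+ n.+1 * srtt a S i.-1 + (1 - (1 - a) ^+ n.+1) * (c - r)
    <= srtt a S (i + n) /\
  srtt a S (i + n)
    <= (1 - a) ^+ n.+1 * srtt a S i.-1 + (1 - (1 - a) ^+ n.+1) * (c + r).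
Proof.
move=> a_gt0 a_lt1 _ _ _; case: i => // m m_ge1; rewrite addSnnS => S_in.
have sm : smoothed_on a (srtt a S) S m n.+1 by exact: srtt_smoothed.
split.
- by apply: (smoothing_ge (ltW a_gt0) (ltW a_lt1) sm) => j /S_in /andP[].
- by apply: (smoothing_le (ltW a_gt0) (ltW a_lt1) sm) => j /S_in /andP[].
Qed.
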